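(* Let $H$ be an infinite-dimensional Hilbert $*$-space with hermitian basis $F$, and fix distinct $u,e\in F$. Let $T\in\mathcal B(H)$ be the unitary with $Tu=e$, $Te=u$ and $Tf=f$ for $f\in F\setminus\{u,e\}$. Then $T(\mathfrak c_u)=\mathfrak c_e$, $T^{(n)}(\min\mathfrak c_u\cap M_n(H))=\min\mathfrak c_e\cap M_n(H)$ and $T^{(n)}(\max\mathfrak c_u\cap M_n(H))=\max\mathfrak c_e\cap M_n(H)$ for all $n$; in particular $T:(H,\max\mathfrak c_u)\to(H,\max\mathfrak c_e)$ is a unital matrix positive map. Nevertheless $T$ is not separable: there is no sequence of linear functionals $q_l$ on $H$ that are nonnegative on $\mathfrak c_u$ and vectors $p_l\in\mathfrak c_e$ with $T\zeta=\lim_k\sum_{l=1}^k q_l(\zeta)p_l$ for all $\zeta\in H$.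
   Context: A Hilbert $*$-space is a complex Hilbert space (inner product linear in the first variable) with a conjugate-linear $\zeta\mapsto\zeta^*$, $\zeta^{**}=\zeta$, $(\zeta^*,\eta^* )=\overline{(\zeta,\eta)}$; a hermitian basis is an orthonormal basis of hermitian vectors. For a hermitian unit vector $w$, the unital cone is $\mathfrak c_w=\{\zeta\in H_h:\|\zeta\|\le\sqrt2(\zeta,w)\}$. Matrices over $H$ or the conjugate space $\overline H$ carry the involution $[x_{ij}]^*=[x_{ji}^*]$; $T^{(n)}[\zeta_{ij}]=[T\zeta_{ij}]$. A state of $\mathfrak c_w$ is a linear functional $\sigma$ with $\sigma(w)=1$, $\sigma(\mathfrak c_w)\ge0$; $\min\mathfrak c_w\cap M_n(H)=\{\zeta\in M_n(H)_h:[\sigma(\zeta_{ij})]\ge0\ \forall$ states $\sigma\}$. With $\mathfrak c_w^\boxdot=\{\bar\eta\in M_n(\overline H)_h:[(\xi,\eta_{st})]\ge0\ \forall\xi\in\mathfrak c_w\}$, $\max\mathfrak c_w\cap M_n(H)=\{\zeta\in M_n(H)_h:[(\zeta_{ik},\eta_{jl})]_{(i,j),(k,l)}\ge0\ \forall\bar\eta\in\mathfrak c_w^\boxdot\}$. *)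

From Stdlib Require Import Reals List.
Open Scope R_scope.

Record Cx := mkC { re : R; im : R }.
Definition C0 : Cx := mkC 0 0.
Definition C1 : Cx := mkC 1 0.
Definition RtoC (r : R) : Cx := mkC r 0.
Definition Cadd (a b : Cx) : Cx := mkC (re a + re b) (im a + im b).
Definition Copp (a : Cx) : Cx := mkC (- re a) (- im a).
Definition Cmul (a b : Cx) : Cx :=
  mkC (re a * re b - im a * im b) (re a * im b + im a * re b).
Definition Cconj (a : Cx) : Cx := mkC (re a) (- im a).

Definition Cnonneg (a : Cx) : Prop := im a = 0 /\ 0 <= re a.

Fixpoint Csum (n : nat) (f : nat -> Cx) : Cx :=
  match n with O => C0 | S m => Cadd (Csum m f) (f m) end.

(** * Hilbert *-spaces: complex Hilbert spaces (inner product linear in the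
    first variable) with a conjugate-linear involution [hstar] such that
    (star x, star y) = conj (x, y). *)
Record HStar := {
  hV :> Type;
  hadd : hV -> hV -> hV;
  hzero : hV;
  hopp : hV -> hV;
  hscal : Cx -> hV -> hV;
  hinner : hV -> hV -> Cx;
  hstar : hV -> hV;
  hadd_comm : forall x y, hadd x y = hadd y x;
  hadd_assoc : forall x y z, hadd x (hadd y z) = hadd (hadd x y) z;
  hadd_zero : forall x, hadd x hzero = x;
  hadd_opp : forall x, hadd x (hopp x) = hzero;
  hscal_one : forall x, hscal C1 x = x;
  hscal_assoc : forall a b x, hscal a (hscal b x) = hscal (Cmul a b) x;
  hscal_addv : forall a x y, hscal a (hadd x y) = hadd (hscal a x) (hscal a y);
  hscal_addc : forall a b x, hscal (Cadd a b) x = hadd (hscal a x) (hscal b x);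
  hinner_addl : forall x y z, hinner (hadd x y) z = Cadd (hinner x z) (hinner y z);
  hinner_scall : forall a x z, hinner (hscal a x) z = Cmul a (hinner x z);
  hinner_conj : forall x y, hinner y x = Cconj (hinner x y);
  hinner_pos : forall x, 0 <= re (hinner x x);
  hinner_def : forall x, hinner x x = C0 -> x = hzero;
  hcomplete : forall s : nat -> hV,
    (forall eps, eps > 0 -> exists N, forall m k, (m >= N)%nat -> (k >= N)%nat ->
        sqrt (re (hinner (hadd (s m) (hopp (s k))) (hadd (s m) (hopp (s k))))) < eps) ->
    exists x, forall eps, eps > 0 -> exists N, forall m, (m >= N)%nat ->
        sqrt (re (hinner (hadd (s m) (hopp x)) (hadd (s m) (hopp x)))) < eps;
  hstar_add : forall x y, hstar (hadd x y) = hadd (hstar x) (hstar y);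
  hstar_scal : forall a x, hstar (hscal a x) = hscal (Cconj a) (hstar x);
  hstar_invol : forall x, hstar (hstar x) = x;
  hstar_inner : forall x y, hinner (hstar x) (hstar y) = Cconj (hinner x y)
}.

Arguments hadd {h}. Arguments hzero {h}. Arguments hopp {h}.
Arguments hscal {h}. Arguments hinner {h}. Arguments hstar {h}.

Section HDefs.
Variable H : HStar.

Definition hnorm (x : H) : R := sqrt (re (hinner x x)).
Definition hsub (x y : H) : H := hadd x (hopp y).

Fixpoint hsum (n : nat) (f : nat -> H) : H :=
  match n with O => hzero | S m => hadd (hsum m f) (f m) end.

Definition in_span (l : list H) (x : H) : Prop :=
  exists c : nat -> Cx,
    x = hsum (length l) (fun i => hscal (c i) (nth i l hzero)).

Definition infinite_dim : Prop :=
  forall l : list H, exists x : H, ~ in_span l x.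

Definition hermitian (x : H) : Prop := hstar x = x.

Definition hermitian_basis (F : H -> Prop) : Prop :=
  (forall f, F f -> hermitian f) /\
  (forall f, F f -> hinner f f = C1) /\
  (forall f g, F f -> F g -> f <> g -> hinner f g = C0) /\
  (forall x, (forall f, F f -> hinner x f = C0) -> x = hzero).

Definition cone (w : H) (z : H) : Prop :=
  hermitian z /\ hnorm z <= sqrt 2 * re (hinner z w).

Definition linear_fun (s : H -> Cx) : Prop :=
  (forall x y, s (hadd x y) = Cadd (s x) (s y)) /\
  (forall a x, s (hscal a x) = Cmul a (s x)).

Definition linear_op (T : H -> H) : Prop :=
  (forall x y, T (hadd x y) = hadd (T x) (T y)) /\
  (forall a x, T (hscal a x) = hscal a (T x)).

Definition state (w : H) (s : H -> Cx) : Prop :=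
  linear_fun s /\ s w = C1 /\ (forall z, cone w z -> Cnonneg (s z)).

(** n x n matrices are represented by functions [nat -> nat -> _];
    only the entries with indices < n are relevant. *)
Definition mat_hermitian (n : nat) (z : nat -> nat -> H) : Prop :=
  forall i j, (i < n)%nat -> (j < n)%nat -> z i j = hstar (z j i).

End HDefs.

Arguments hnorm {H}. Arguments hsub {H}. Arguments hsum {H}.
Arguments hermitian {H}. Arguments cone {H}. Arguments linear_fun {H}.
Arguments linear_op {H}. Arguments state {H}. Arguments mat_hermitian {H}.
Arguments hermitian_basis {H}.

Definition psd (n : nat) (a : nat -> nat -> Cx) : Prop :=
  forall al : nat -> Cx,
    Cnonneg (Csum n (fun i => Csum n (fun j =>
       Cmul (Cmul (Cconj (al i)) (a i j)) (al j)))).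

(** positive semidefinite n^2 x n^2 complex matrix, with rows and columns
    indexed by pairs: [a i j k l] is the entry in row (i,j), column (k,l) *)
Definition psd2 (n : nat) (a : nat -> nat -> nat -> nat -> Cx) : Prop :=
  forall al : nat -> nat -> Cx,
    Cnonneg (Csum n (fun i => Csum n (fun j => Csum n (fun k => Csum n (fun l =>
       Cmul (Cmul (Cconj (al i j)) (a i j k l)) (al k l)))))).

Section Cones.
Variable H : HStar.

Definition min_cone (w : H) (n : nat) (z : nat -> nat -> H) : Prop :=
  mat_hermitian n z /\
  forall s, state w s -> psd n (fun i j => s (z i j)).

(** c_w^⊡ ∩ M_n(conj H): an element [bar eta] of M_n(conj H) is represented
    by the matrix [eta] over H; hermitian in M_n(conj H) means
    eta_st = (eta_ts)^*. *)
Definition box_cone (w : H) (n : nat) (eta : nat -> nat -> H) : Prop :=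
  mat_hermitian n eta /\
  forall x, cone w x -> psd n (fun s t => hinner x (eta s t)).

Definition max_cone (w : H) (n : nat) (z : nat -> nat -> H) : Prop :=
  mat_hermitian n z /\
  forall eta, box_cone w n eta ->
    psd2 n (fun i j k l => hinner (z i k) (eta j l)).

End Cones.

Arguments min_cone {H}. Arguments box_cone {H}. Arguments max_cone {H}.

Definition ampl {H : HStar} (T : H -> H) (z : nat -> nat -> H) : nat -> nat -> H :=
  fun i j => T (z i j).

Definition mat_image {H : HStar} (T : H -> H) (n : nat)
  (P : (nat -> nat -> H) -> Prop) (z : nat -> nat -> H) : Prop :=
  exists y, P y /\ forall i j, (i < n)%nat -> (j < n)%nat -> T (y i j) = z i j.

Definition mat_set_eq {H : HStar} (n : nat)
  (P Q : (nat -> nat -> H) -> Prop) : Prop :=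
  forall z, P z <-> Q z.

(* The swap [T] of two basis vectors is a self-adjoint unitary commuting
   with the involution, so it transports every structure built from the
   unit [u] (the cone, its states, the dual matrix cones) onto the same
   structure built from [e], and back again.

   Separability fails by a positivity count on two further basis vectors
   [f1], [f2].  For [p] in [c_e], Bessel's inequality and [|p| <= sqrt 2 (p,e)]
   give [(p,f1)^2 + (p,f2)^2 <= (p,e)^2]; for [q] nonnegative on [c_u], the
   vectors [u + t1 f1 + t2 f2] with [t1^2 + t2^2 = 1] lie in [c_u], whence
   [|(q f1, q f2)| <= q u].  By Cauchy-Schwarz every summand satisfies
   [q(f1)(p,f1) + q(f2)(p,f2) <= q(u)(p,e)].  Summing over [l], the left side
   tends to [(T f1,f1) + (T f2,f2) = 2] and the right side to [(T u,e) = 1]. *)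

From Stdlib Require Import Reals List Lra Lia Classical.
Open Scope R_scope.

Lemma Cx_ext (a b : Cx) : re a = re b -> im a = im b -> a = b.
Proof. destruct a, b; simpl; intros; subst; reflexivity. Qed.

Lemma hinner_zerol (H : HStar) (z : H) : hinner hzero z = C0.
Proof.
  assert (E := hinner_addl H hzero hzero z). rewrite hadd_zero in E.
  destruct (hinner hzero z) as [a b]; unfold Cadd in E; simpl in E.
  injection E; intros; apply Cx_ext; simpl; lra.
Qed.

Lemma hinner_oppl (H : HStar) (x z : H) : hinner (hopp x) z = Copp (hinner x z).
Proof.
  assert (E := hinner_addl H x (hopp x) z). rewrite hadd_opp, hinner_zerol in E.
  destruct (hinner x z) as [a b], (hinner (hopp x) z) as [c d].
  unfold Cadd in E; simpl in E.
  injection E; intros; apply Cx_ext; simpl; lra.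
Qed.

Lemma basis_inner_inj (H : HStar) (F : H -> Prop) (a b : H) :
  hermitian_basis F -> (forall f, F f -> hinner a f = hinner b f) -> a = b.
Proof.
  intros (_ & _ & _ & Hcomplete) Hab.
  assert (E : hadd a (hopp b) = hzero).
  { apply Hcomplete; intros f Hf. rewrite hinner_addl, hinner_oppl, (Hab f Hf).
    destruct (hinner b f); apply Cx_ext; simpl; lra. }
  rewrite <- (hadd_zero H a), <- (hadd_opp H b), (hadd_comm H b), hadd_assoc, E,
    hadd_comm, hadd_zero. reflexivity.
Qed.

Lemma im_hinner_hermitian (H : HStar) (x y : H) :
  hermitian x -> hermitian y -> im (hinner x y) = 0.
Proof.
  unfold hermitian; intros Hx Hy. pose proof (hstar_inner H x y) as E.
  rewrite Hx, Hy in E. destruct (hinner x y) as [a b]. unfold Cconj in E; simpl in *.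
  injection E; lra.
Qed.

Lemma re_hinner_sym (H : HStar) (x y : H) : re (hinner y x) = re (hinner x y).
Proof. rewrite hinner_conj. reflexivity. Qed.

Lemma re_hinner_scall (H : HStar) (c : R) (x y : H) :
  re (hinner (hscal (RtoC c) x) y) = c * re (hinner x y).
Proof. rewrite hinner_scall. simpl. ring. Qed.

Lemma re_hinner_scalr (H : HStar) (c : R) (x y : H) :
  re (hinner x (hscal (RtoC c) y)) = c * re (hinner x y).
Proof. rewrite re_hinner_sym, re_hinner_scall, re_hinner_sym. reflexivity. Qed.

Lemma re_hinner_addl (H : HStar) (x y z : H) :
  re (hinner (hadd x y) z) = re (hinner x z) + re (hinner y z).
Proof. rewrite hinner_addl. reflexivity. Qed.

Lemma re_hinner_addr (H : HStar) (x y z : H) :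
  re (hinner z (hadd x y)) = re (hinner z x) + re (hinner z y).
Proof.
  rewrite re_hinner_sym, re_hinner_addl, !(re_hinner_sym H z). reflexivity.
Qed.

Definition hadd_rscal {H : HStar} (x : H) (c : R) (g : H) : H :=
  hadd x (hscal (RtoC c) g).

Lemma re_hinner_hadd_rscal (H : HStar) (x g k : H) (c : R) :
  re (hinner (hadd_rscal x c g) k) = re (hinner x k) + c * re (hinner g k).
Proof. unfold hadd_rscal. rewrite re_hinner_addl, re_hinner_scall. reflexivity. Qed.

Lemma re_norm_hadd_rscal (H : HStar) (x g : H) (c : R) :
  re (hinner g g) = 1 ->
  re (hinner (hadd_rscal x c g) (hadd_rscal x c g))
  = re (hinner x x) + 2 * c * re (hinner x g) + c * c.
Proof.
  intro Hg; unfold hadd_rscal.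
  rewrite re_hinner_addl, !re_hinner_addr, !re_hinner_scall, !re_hinner_scalr, Hg,
    (re_hinner_sym H x g). ring.
Qed.

Lemma hermitian_hadd_rscal (H : HStar) (x g : H) (c : R) :
  hermitian x -> hermitian g -> hermitian (hadd_rscal x c g).
Proof.
  unfold hermitian, hadd_rscal. intros Hx Hg. rewrite hstar_add, hstar_scal, Hx, Hg.
  do 2 f_equal. apply Cx_ext; simpl; lra.
Qed.

Lemma re_hinner_sq_le (H : HStar) (x g : H) :
  re (hinner g g) = 1 -> re (hinner x g) * re (hinner x g) <= re (hinner x x).
Proof.
  intro Hg. pose proof (hinner_pos H (hadd_rscal x (- re (hinner x g)) g)) as P.
  rewrite re_norm_hadd_rscal in P by exact Hg. nra.
Qed.

Section BasisInner.
Variables (H : HStar) (F : H -> Prop).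
Hypothesis HF : hermitian_basis F.

Lemma re_hinner_basis_self f : F f -> re (hinner f f) = 1.
Proof. destruct HF as (_ & Hn & _). intro Hf. rewrite (Hn f Hf). reflexivity. Qed.

Lemma re_hinner_basis_orth f g : F f -> F g -> f <> g -> re (hinner f g) = 0.
Proof. destruct HF as (_ & _ & Ho & _). intros Hf Hg Hfg. rewrite (Ho f g Hf Hg Hfg). reflexivity. Qed.

End BasisInner.

Lemma Csum_ext n f g : (forall i, (i < n)%nat -> f i = g i) -> Csum n f = Csum n g.
Proof.
  induction n; intros E; simpl; [reflexivity|].
  rewrite IHn by (intros; apply E; lia). rewrite E by lia. reflexivity.
Qed.

Lemma psd_ext n a b : (forall i j, (i < n)%nat -> (j < n)%nat -> a i j = b i j) ->
  psd n a -> psd n b.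
Proof.
  intros E P al. specialize (P al).
  erewrite Csum_ext; [exact P|]. intros i Hi.
  apply Csum_ext. intros j Hj. rewrite E by assumption. reflexivity.
Qed.

Lemma psd2_ext n a b :
  (forall i j k l, (i < n)%nat -> (j < n)%nat -> (k < n)%nat -> (l < n)%nat ->
     a i j k l = b i j k l) ->
  psd2 n a -> psd2 n b.
Proof.
  intros E P al. specialize (P al).
  erewrite Csum_ext; [exact P|]. intros i Hi.
  apply Csum_ext; intros j Hj. apply Csum_ext; intros k Hk. apply Csum_ext; intros l Hl.
  rewrite E by assumption. reflexivity.
Qed.

Section MatrixExt.
Variables (H : HStar) (w : H) (n : nat) (z z' : nat -> nat -> H).
Hypothesis Ezz' : forall i j, (i < n)%nat -> (j < n)%nat -> z i j = z' i j.

Lemma mat_hermitian_ext : mat_hermitian n z -> mat_hermitian n z'.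
Proof. intros Hh i j Hi Hj. rewrite <- !Ezz' by assumption. apply Hh; assumption. Qed.

Lemma min_cone_ext : min_cone w n z -> min_cone w n z'.
Proof.
  intros [Hh Hp]. split; [apply mat_hermitian_ext, Hh|].
  intros s Hs. apply (psd_ext n (fun i j => s (z i j))); [|apply Hp, Hs].
  intros; rewrite Ezz' by assumption; reflexivity.
Qed.

Lemma max_cone_ext : max_cone w n z -> max_cone w n z'.
Proof.
  intros [Hh Hp]. split; [apply mat_hermitian_ext, Hh|].
  intros eta He. apply (psd2_ext n (fun i j k l => hinner (z i k) (eta j l))); [|apply Hp, He].
  intros; rewrite Ezz' by assumption; reflexivity.
Qed.

End MatrixExt.

(** * Transport of the cones by a self-adjoint unitary *)

Section SelfAdjointUnitary.
Variables (H : HStar) (T : H -> H).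
Hypotheses (T_linear : linear_op T)
  (T_isometry : forall x y, hinner (T x) (T y) = hinner x y)
  (T_involutive : forall x, T (T x) = x)
  (T_star : forall x, T (hstar x) = hstar (T x)).

Lemma T_selfadjoint x y : hinner (T x) y = hinner x (T y).
Proof. rewrite <- (T_involutive y) at 1. apply T_isometry. Qed.

Lemma cone_T w x : cone w x -> cone (T w) (T x).
Proof.
  intros [Hh Hn]. split.
  - unfold hermitian in *. rewrite <- T_star, Hh. reflexivity.
  - unfold hnorm. rewrite !T_isometry. exact Hn.
Qed.

Lemma state_T w s : state w s -> state (T w) (fun x => s (T x)).
Proof.
  intros [[Ha Hs] [H1 Hp]]. destruct T_linear as [La Ls].
  split; [split|split].
  - intros x y. rewrite La. apply Ha.
  - intros a x. rewrite Ls. apply Hs.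
  - rewrite T_involutive. exact H1.
  - intros z Hz. apply Hp. rewrite <- (T_involutive w). apply cone_T, Hz.
Qed.

Lemma mat_hermitian_T n z : mat_hermitian n z -> mat_hermitian n (ampl T z).
Proof. intros Hz i j Hi Hj. unfold ampl. rewrite Hz by assumption. apply T_star. Qed.

Lemma min_cone_T w n z : min_cone w n z -> min_cone (T w) n (ampl T z).
Proof.
  intros [Hh Hp]. split; [apply mat_hermitian_T, Hh|].
  intros s Hs. apply (Hp (fun x => s (T x))).
  rewrite <- (T_involutive w). apply state_T, Hs.
Qed.

Lemma box_cone_T w n eta : box_cone w n eta -> box_cone (T w) n (ampl T eta).
Proof.
  intros [Hh Hp]. split; [apply mat_hermitian_T, Hh|].
  intros x Hx. unfold ampl.
  apply (psd_ext n (fun s t => hinner (T x) (eta s t))).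
  - intros; apply T_selfadjoint.
  - apply Hp. rewrite <- (T_involutive w). apply cone_T, Hx.
Qed.

Lemma max_cone_T w n z : max_cone w n z -> max_cone (T w) n (ampl T z).
Proof.
  intros [Hh Hp]. split; [apply mat_hermitian_T, Hh|].
  intros eta He. unfold ampl.
  apply (psd2_ext n (fun i j k l => hinner (z i k) (ampl T eta j l))).
  - intros; unfold ampl. symmetry. apply T_selfadjoint.
  - apply Hp. rewrite <- (T_involutive w). apply box_cone_T, He.
Qed.

Lemma mat_image_involutive n (P Q : (nat -> nat -> H) -> Prop) :
  (forall z, P z -> Q (ampl T z)) -> (forall z, Q z -> P (ampl T z)) ->
  (forall z z', (forall i j, (i < n)%nat -> (j < n)%nat -> z i j = z' i j) -> Q z -> Q z') ->
  forall z, Q z <-> mat_image T n P z.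
Proof.
  intros HPQ HQP Qext z; split.
  - intro Hz. exists (ampl T z). split; [apply HQP, Hz|].
    intros; apply T_involutive.
  - intros [y [Hy Hyz]]. apply (Qext (ampl T y)); [exact Hyz|]. apply HPQ, Hy.
Qed.

End SelfAdjointUnitary.

Section BasisSwap.
Variables (H : HStar) (F : H -> Prop) (u e : H) (T : H -> H).
Hypotheses (HF : hermitian_basis F) (Fu : F u) (Fe : F e)
  (T_isometry : forall x y, hinner (T x) (T y) = hinner x y)
  (Tu : T u = e) (Te : T e = u)
  (Tf : forall f, F f -> f <> u -> f <> e -> T f = f).

Lemma swap_basis f : F f -> F (T f) /\ T (T f) = f.
Proof.
  intro Hf. destruct (classic (f = u)) as [->|Nu]; [rewrite Tu, Te; auto|].
  destruct (classic (f = e)) as [->|Ne]; [rewrite Te, Tu; auto|].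
  rewrite !(Tf f Hf Nu Ne). auto.
Qed.

Lemma swap_inner_basis y f : F f -> hinner (T y) f = hinner y (T f).
Proof.
  intro Hf. destruct (swap_basis f Hf) as [_ E]. rewrite <- E at 1. apply T_isometry.
Qed.

Lemma swap_involutive x : T (T x) = x.
Proof.
  apply (basis_inner_inj H F); [exact HF|]. intros f Hf.
  destruct (swap_basis f Hf) as [FTf TTf].
  rewrite swap_inner_basis, swap_inner_basis, TTf by assumption. reflexivity.
Qed.

Lemma swap_star x : T (hstar x) = hstar (T x).
Proof.
  apply (basis_inner_inj H F); [exact HF|]. intros f Hf.
  destruct HF as (Hherm & _). destruct (swap_basis f Hf) as [FTf _].
  rewrite swap_inner_basis by exact Hf.
  rewrite <- (Hherm f Hf) at 2. rewrite hstar_inner, swap_inner_basis by exact Hf.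
  rewrite <- (Hherm _ FTf) at 1. rewrite hstar_inner. reflexivity.
Qed.

End BasisSwap.

Lemma hinner_hsum (H : HStar) k (phi : nat -> H) (g : H) :
  hinner (hsum k phi) g = Csum k (fun i => hinner (phi i) g).
Proof.
  induction k; simpl; [apply hinner_zerol|]. rewrite hinner_addl, IHk. reflexivity.
Qed.

Lemma Csum_delta n i0 (a : Cx) : (i0 < n)%nat ->
  Csum n (fun i => if Nat.eq_dec i i0 then a else C0) = a.
Proof.
  assert (Hgen : forall m, Csum m (fun i => if Nat.eq_dec i i0 then a else C0)
                           = if Nat.ltb i0 m then a else C0).
  { induction m; [reflexivity|]. simpl. rewrite IHm.
    destruct (Nat.eq_dec m i0) as [->|Ne].
    - rewrite (proj2 (Nat.ltb_ge i0 i0)), (proj2 (Nat.ltb_lt i0 (S i0))) by lia.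
      destruct a; apply Cx_ext; simpl; ring.
    - destruct (Nat.ltb_spec i0 m), (Nat.ltb_spec i0 (S m)); try lia;
        [destruct a|]; apply Cx_ext; simpl; ring. }
  intro Hi0. rewrite Hgen. apply Nat.ltb_lt in Hi0. rewrite Hi0. reflexivity.
Qed.

Lemma basis_avoids_list (H : HStar) (F : H -> Prop) (l : list H) :
  infinite_dim H -> hermitian_basis F -> NoDup l -> (forall g, In g l -> F g) ->
  exists f, F f /\ ~ In f l.
Proof.
  intros Hinf HF Hnd Hl. apply NNPP; intro Hno.
  assert (Hall : forall g, F g -> In g l).
  { intros g Hg. apply NNPP; intro Hg'. apply Hno. exists g. auto. }
  destruct (Hinf l) as [x Hx]. apply Hx.
  exists (fun i => hinner x (nth i l hzero)).
  apply (basis_inner_inj H F); [exact HF|]. intros g Hg.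
  destruct HF as (_ & Hn & Ho & _).
  destruct (In_nth l g hzero (Hall g Hg)) as [i0 [Hi0 Ei0]].
  rewrite hinner_hsum, <- (Csum_delta (length l) i0 (hinner x g) Hi0).
  apply Csum_ext. intros i Hi. rewrite hinner_scall.
  destruct (Nat.eq_dec i i0) as [->|Ne].
  - rewrite Ei0, (Hn g Hg). destruct (hinner x g); apply Cx_ext; simpl; ring.
  - assert (Nig : nth i l hzero <> g).
    { intro E. apply Ne. rewrite <- Ei0 in E.
      exact (proj1 (NoDup_nth l hzero) Hnd i i0 Hi Hi0 E). }
    rewrite (Ho _ g (Hl _ (nth_In l hzero Hi)) Hg Nig).
    destruct (hinner x _); apply Cx_ext; simpl; ring.
Qed.

Lemma basis_has_two_more (H : HStar) (F : H -> Prop) (u e : H) :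
  infinite_dim H -> hermitian_basis F -> F u -> F e -> u <> e ->
  exists f1 f2, F f1 /\ F f2 /\
    u <> f1 /\ u <> f2 /\ e <> f1 /\ e <> f2 /\ f1 <> f2.
Proof.
  intros Hinf HF Hu He Hue.
  destruct (basis_avoids_list H F (u :: e :: nil) Hinf HF) as [f1 [Hf1 N1]].
  { repeat constructor; simpl; intuition. }
  { simpl; intuition congruence. }
  destruct (basis_avoids_list H F (u :: e :: f1 :: nil) Hinf HF) as [f2 [Hf2 N2]].
  { repeat constructor; simpl in *; intuition. }
  { simpl; intuition congruence. }
  exists f1, f2. simpl in *. intuition congruence.
Qed.

(** * Non-separability *)

Fixpoint Rsum (k : nat) (f : nat -> R) : R :=
  match k with O => 0 | S m => Rsum m f + f m end.

Lemma Rsum_le k f g : (forall l, f l <= g l) -> Rsum k f <= Rsum k g.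
Proof. intros Hl; induction k; simpl; [lra|]. specialize (Hl k). lra. Qed.

Lemma Rsum_add k f g : Rsum k (fun l => f l + g l) = Rsum k f + Rsum k g.
Proof. induction k; simpl; [ring|]. rewrite IHk. ring. Qed.

Lemma Rsum_ext k f g : (forall l, f l = g l) -> Rsum k f = Rsum k g.
Proof. intros Hl; induction k; simpl; [lra|]. rewrite IHk, Hl. reflexivity. Qed.

Lemma re_Csum k f : re (Csum k f) = Rsum k (fun l => re (f l)).
Proof. induction k; simpl; [reflexivity|]. rewrite IHk. reflexivity. Qed.

(* [(p l, g)] is real, so only the real parts of the coefficients survive. *)
Lemma re_series_converges (H : HStar) (q : nat -> Cx) (p : nat -> H) (y g : H) :
  hermitian g -> re (hinner g g) = 1 -> (forall l, hermitian (p l)) ->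
  (forall eps, eps > 0 -> exists N, forall k, (k >= N)%nat ->
     hnorm (hsub (hsum k (fun l => hscal (q l) (p l))) y) < eps) ->
  forall eps, eps > 0 -> exists N, forall k, (k >= N)%nat ->
    Rabs (Rsum k (fun l => re (q l) * re (hinner (p l) g)) - re (hinner y g)) < eps.
Proof.
  intros Hg Ng Hp Hc eps Heps. destruct (Hc eps Heps) as [N HN]. exists N. intros k Hk.
  specialize (HN k Hk). unfold hnorm in HN.
  set (x := hsub (hsum k (fun l => hscal (q l) (p l))) y) in *.
  assert (Hx : re (hinner x x) < eps * eps).
  { pose proof (sqrt_sqrt _ (hinner_pos H x)). pose proof (sqrt_pos (re (hinner x x))). nra. }
  pose proof (re_hinner_sq_le H x g Ng).
  assert (E : re (hinner x g)
              = Rsum k (fun l => re (q l) * re (hinner (p l) g)) - re (hinner y g)).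
  { unfold x, hsub. rewrite hinner_addl, hinner_oppl, hinner_hsum. simpl.
    rewrite re_Csum, (Rsum_ext k _ (fun l => re (q l) * re (hinner (p l) g))); [ring|].
    intro l. rewrite hinner_scall. simpl. rewrite (im_hinner_hermitian H (p l) g (Hp l) Hg). ring. }
  rewrite <- E. apply Rabs_def1; nra.
Qed.

Lemma dot_le_of_unit_test (c x1 x2 b1 b2 : R) :
  (forall t1 t2, t1 * t1 + t2 * t2 = 1 -> 0 <= c + t1 * x1 + t2 * x2) ->
  b1 * x1 + b2 * x2 <= sqrt (b1 * b1 + b2 * b2) * c.
Proof.
  intro Htest. set (be := sqrt (b1 * b1 + b2 * b2)).
  assert (Hbe2 : be * be = b1 * b1 + b2 * b2) by (apply sqrt_sqrt; nra).
  assert (Hbe0 : 0 <= be) by apply sqrt_pos.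
  destruct (Req_dec be 0) as [Z|NZ].
  - assert (b1 = 0) by nra. assert (b2 = 0) by nra. subst b1 b2. rewrite Z. lra.
  - assert (Ht : - b1 / be * (- b1 / be) + - b2 / be * (- b2 / be) = 1).
    { replace (- b1 / be * (- b1 / be) + - b2 / be * (- b2 / be))
        with ((b1 * b1 + b2 * b2) / (be * be)) by (field; lra).
      rewrite <- Hbe2. field. lra. }
    assert (P := Rmult_le_pos be _ Hbe0 (Htest _ _ Ht)).
    replace (be * (c + - b1 / be * x1 + - b2 / be * x2))
      with (be * c - (b1 * x1 + b2 * x2)) in P by (field; lra).
    lra.
Qed.

Section NonSeparable.
Variables (H : HStar) (u e f1 f2 : H).
Hypotheses (hu : hermitian u) (he : hermitian e) (hf1 : hermitian f1) (hf2 : hermitian f2)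
  (nu : re (hinner u u) = 1) (ne : re (hinner e e) = 1)
  (nf1 : re (hinner f1 f1) = 1) (nf2 : re (hinner f2 f2) = 1)
  (o_uf1 : re (hinner u f1) = 0) (o_uf2 : re (hinner u f2) = 0)
  (o_ef1 : re (hinner e f1) = 0) (o_ef2 : re (hinner e f2) = 0)
  (o_f1f2 : re (hinner f1 f2) = 0).

Lemma bessel3 p :
  re (hinner p e) * re (hinner p e) + re (hinner p f1) * re (hinner p f1)
  + re (hinner p f2) * re (hinner p f2) <= re (hinner p p).
Proof.
  set (a := re (hinner p e)). set (b1 := re (hinner p f1)). set (b2 := re (hinner p f2)).
  set (p1 := hadd_rscal p (- a) e). set (p2 := hadd_rscal p1 (- b1) f1).
  set (p3 := hadd_rscal p2 (- b2) f2).
  assert (E1 : re (hinner p1 p1) = re (hinner p p) - a * a)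
    by (unfold p1; rewrite re_norm_hadd_rscal by exact ne; fold a; ring).
  assert (E1f1 : re (hinner p1 f1) = b1)
    by (unfold p1; rewrite re_hinner_hadd_rscal, o_ef1; fold b1; ring).
  assert (E1f2 : re (hinner p1 f2) = b2)
    by (unfold p1; rewrite re_hinner_hadd_rscal, o_ef2; fold b2; ring).
  assert (E2 : re (hinner p2 p2) = re (hinner p p) - a * a - b1 * b1)
    by (unfold p2; rewrite re_norm_hadd_rscal, E1, E1f1 by exact nf1; ring).
  assert (E2f2 : re (hinner p2 f2) = b2)
    by (unfold p2; rewrite re_hinner_hadd_rscal, o_f1f2, E1f2; ring).
  assert (E3 : re (hinner p3 p3) = re (hinner p p) - a * a - b1 * b1 - b2 * b2)
    by (unfold p3; rewrite re_norm_hadd_rscal, E2, E2f2 by exact nf2; ring).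
  pose proof (hinner_pos H p3) as P3. lra.
Qed.

Lemma cone_e_bound p : cone e p ->
  0 <= re (hinner p e) /\
  re (hinner p f1) * re (hinner p f1) + re (hinner p f2) * re (hinner p f2)
  <= re (hinner p e) * re (hinner p e).
Proof.
  intros [_ Hn]. unfold hnorm in Hn. pose proof (bessel3 p) as Hbessel.
  set (a := re (hinner p e)) in *.
  pose proof (sqrt_sqrt _ (hinner_pos H p)). pose proof (sqrt_pos (re (hinner p p))).
  pose proof (sqrt_sqrt 2 ltac:(lra)).
  assert (0 < sqrt 2) by (apply sqrt_lt_R0; lra).
  assert (Ha : 0 <= a) by nra.
  split; [exact Ha | nra].
Qed.

Lemma cone_u_unit_circle t1 t2 : t1 * t1 + t2 * t2 = 1 ->
  cone u (hadd_rscal (hadd_rscal u t1 f1) t2 f2).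
Proof.
  intro Ht. split.
  - repeat apply hermitian_hadd_rscal; assumption.
  - unfold hnorm.
    rewrite !re_norm_hadd_rscal, !re_hinner_hadd_rscal,
      (re_hinner_sym H u f1), (re_hinner_sym H u f2), nu, o_uf1, o_uf2, o_f1f2
      by assumption.
    replace (1 + 2 * t1 * 0 + t1 * t1 + 2 * t2 * (0 + t1 * 0) + t2 * t2) with 2 by lra.
    lra.
Qed.


Lemma cone_u_functional_unit_test (q : H -> Cx) :
  linear_fun q -> (forall x, cone u x -> Cnonneg (q x)) ->
  forall t1 t2, t1 * t1 + t2 * t2 = 1 ->
  0 <= re (q u) + t1 * re (q f1) + t2 * re (q f2).
Proof.
  intros [Qa Qs] Qpos t1 t2 Ht.
  destruct (Qpos _ (cone_u_unit_circle t1 t2 Ht)) as [_ Qv].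
  unfold hadd_rscal in Qv. rewrite !Qa, !Qs in Qv. simpl in Qv. lra.
Qed.

Lemma summand_le (q : H -> Cx) (p : H) :
  linear_fun q -> (forall x, cone u x -> Cnonneg (q x)) -> cone e p ->
  re (q f1) * re (hinner p f1) + re (q f2) * re (hinner p f2)
  <= re (q u) * re (hinner p e).
Proof.
  intros Qlin Qpos Hp.
  pose proof (cone_u_functional_unit_test q Qlin Qpos) as Htest.
  assert (Qu : 0 <= re (q u)).
  { pose proof (Htest 1 0 ltac:(lra)). pose proof (Htest (-1) 0 ltac:(lra)). lra. }
  destruct (cone_e_bound p Hp) as [Ha Hb].
  set (b1 := re (hinner p f1)) in *. set (b2 := re (hinner p f2)) in *.
  set (a := re (hinner p e)) in *.
  assert (Hdot := dot_le_of_unit_test _ _ _ b1 b2 Htest).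
  assert (Hs : sqrt (b1 * b1 + b2 * b2) <= a).
  { rewrite <- (sqrt_square a Ha). apply sqrt_le_1_alt. exact Hb. }
  nra.
Qed.

Lemma swap_not_separable (T : H -> H) :
  T u = e -> T f1 = f1 -> T f2 = f2 ->
  ~ (exists (q : nat -> H -> Cx) (p : nat -> H),
       (forall l, linear_fun (q l) /\ forall x, cone u x -> Cnonneg (q l x)) /\
       (forall l, cone e (p l)) /\
       (forall z eps, eps > 0 -> exists N, forall k, (k >= N)%nat ->
          hnorm (hsub (hsum k (fun l => hscal (q l z) (p l))) (T z)) < eps)).
Proof.
  intros Tu Tf1 Tf2 (q & p & Hq & Hp & Hconv).
  assert (Hph : forall l, hermitian (p l)) by (intro l; apply (Hp l)).
  assert (S1 := re_series_converges H (fun l => q l f1) p _ f1 hf1 nf1 Hph (Hconv f1)).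
  assert (S2 := re_series_converges H (fun l => q l f2) p _ f2 hf2 nf2 Hph (Hconv f2)).
  assert (Se := re_series_converges H (fun l => q l u) p _ e he ne Hph (Hconv u)).
  rewrite Tf1, nf1 in S1. rewrite Tf2, nf2 in S2. rewrite Tu, ne in Se.
  destruct (S1 (1/4) ltac:(lra)) as [K1 HK1].
  destruct (S2 (1/4) ltac:(lra)) as [K2 HK2].
  destruct (Se (1/4) ltac:(lra)) as [K3 HK3].
  set (k := (K1 + K2 + K3)%nat).
  specialize (HK1 k ltac:(unfold k; lia)). specialize (HK2 k ltac:(unfold k; lia)).
  specialize (HK3 k ltac:(unfold k; lia)).
  apply Rabs_def2 in HK1, HK2, HK3.
  assert (Hsum := Rsum_le k _ _ (fun l => summand_le (q l) (p l)
                    (proj1 (Hq l)) (proj2 (Hq l)) (Hp l))).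
  rewrite Rsum_add in Hsum. lra.
Qed.

End NonSeparable.

Theorem mainTheorem16 (H : HStar) (F : H -> Prop) (u e : H) (T : H -> H)
  (Hinf : infinite_dim H) (HF : hermitian_basis F)
  (Hu : F u) (He : F e) (Hue : u <> e)
  (HTlin : linear_op T)
  (HTunit : (forall x y, hinner (T x) (T y) = hinner x y) /\
            (forall y, exists x, T x = y))
  (HTu : T u = e) (HTe : T e = u)
  (HTf : forall f, F f -> f <> u -> f <> e -> T f = f) :
  (forall z, cone e z <-> exists x, cone u x /\ T x = z) /\
  (forall n (z : nat -> nat -> H),
     min_cone e n z <-> mat_image T n (min_cone u n) z) /\
  (forall n (z : nat -> nat -> H),
     max_cone e n z <-> mat_image T n (max_cone u n) z) /\
  (T u = e /\ forall n (z : nat -> nat -> H),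
     max_cone u n z -> max_cone e n (ampl T z)) /\
  ~ (exists (q : nat -> H -> Cx) (p : nat -> H),
       (forall l, linear_fun (q l) /\ forall x, cone u x -> Cnonneg (q l x)) /\
       (forall l, cone e (p l)) /\
       (forall z eps, eps > 0 -> exists N, forall k, (k >= N)%nat ->
          hnorm (hsub (hsum k (fun l => hscal (q l z) (p l))) (T z)) < eps)).
Proof.
  destruct HTunit as [Hisom _].
  pose proof (swap_involutive H F u e T HF Hu He Hisom HTu HTe HTf) as Tinv.
  pose proof (swap_star H F u e T HF Hu He Hisom HTu HTe HTf) as Tstar.
  split; [|split; [|split; [|split]]].
  - intro z; split.
    + intro Hz. exists (T z). rewrite Tinv. split; [|reflexivity].
      rewrite <- HTe. apply cone_T; assumption.
    + intros [x [Hx <-]]. rewrite <- HTu. apply cone_T; assumption.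
  - intro n. apply (mat_image_involutive H T Tinv).
    + intros z Hz. rewrite <- HTu. apply min_cone_T; assumption.
    + intros z Hz. rewrite <- HTe. apply min_cone_T; assumption.
    + intros z z' E. apply min_cone_ext, E.
  - intro n. apply (mat_image_involutive H T Tinv).
    + intros z Hz. rewrite <- HTu. apply max_cone_T; assumption.
    + intros z Hz. rewrite <- HTe. apply max_cone_T; assumption.
    + intros z z' E. apply max_cone_ext, E.
  - split; [exact HTu|]. intros n z Hz. rewrite <- HTu. apply max_cone_T; assumption.
  - destruct (basis_has_two_more H F u e Hinf HF Hu He Hue)
      as (f1 & f2 & Hf1 & Hf2 & Nuf1 & Nuf2 & Nef1 & Nef2 & Nf12).
    pose proof (re_hinner_basis_self H F HF) as Hunit.
    pose proof (re_hinner_basis_orth H F HF) as Horth.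
    destruct HF as (Hherm & _).
    apply (swap_not_separable H u e f1 f2); auto.
Qed.
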